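(* For every $n\ge 1$ and every Dyck path $D\in\mathcal{D}_n$, the poset $\psi(D)$ is isomorphic to $\Xi_{\mathrm{poset}}(\Lambda_{\mathrm{steep}}(D))$; that is, $\psi=\Xi_{\mathrm{poset}}\circ\Lambda_{\mathrm{steep}}$ as maps to unit interval posets up to isomorphism.
   Context: A Dyck path of size $n$ is a lattice path from $(0,0)$ to $(n,n)$ with steps $\uparrow=(0,1)$ and $\rightarrow=(1,0)$ staying weakly above $y=x$; $\mathcal{D}_n$ is their set. Its area vector $(a_1,\dots,a_n)$ has $a_i$ equal to the number of full unit squares lying between the path and the diagonal $y=x$ in the row $i-1\le y\le i$. A plane tree is either a single node, or a root joined to an ordered (left-to-right) sequence of plane trees whose roots are its children; $\mathcal{T}_n$ is the set of plane trees with $n$ non-root nodes; the depth $d(u)$ of a node is its distance to the root. For a finite $S=\{x_1<\dots<x_n\}\subset\mathbb{R}$, $\preceq_S$ is the partial order on $[n]$ with $i\prec_S j$ iff $x_i+1<x_j$. $\Xi_{\mathrm{steep}}$: for $T\in\mathcal{T}_n$, perform the clockwise contour walk around $T$ starting at the root (so subtrees are visited from right to left); append $\uparrow$ each time an edge is traversed for the first time and $\rightarrow$ each time it is traversed for the second time. This is a bijection $\mathcal{T}_n\to\mathcal{D}_n$; $\Lambda_{\mathrm{steep}}$ is its inverse. $\Xi_{\mathrm{poset}}$: for $T\in\mathcal{T}_n$ with maximal number of children $m$, for a non-root node $u$ let $c(u)=i$ if $u$ is the $i$-th child of its parent counted from right to left; with $u_0=\text{root},\dots,u_{d(u)}=u$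 the root-to-$u$ path set $x_u=d(u)+\sum_{i=1}^{d(u)}c(u_i)(m+2)^{-i}$; with $S=\{x_u: u\text{ non-root}\}$, $\Xi_{\mathrm{poset}}(T)=([n],\preceq_S)$. $\psi$: for $D\in\mathcal{D}_n$ with area vector $(a_1,\dots,a_n)$, $\psi(D)$ is the poset on $[n]$ with $i\prec j$ iff either $a_i+2\le a_j$, or ($a_i+1=a_j$ and $i<j$). *)

From HB Require Import structures.
From mathcomp Require Import all_boot all_order all_algebra.
Unset Printing Implicit Defensive.
Import Order.TTheory GRing.Theory Num.Theory.

(* ---------- Dyck paths: words over bool, true = up step, false = right step *)

Definition is_dyck (n : nat) (D : seq bool) : bool :=
  [&& size D == 2 * n, count id D == n &
      all (fun i => count negb (take i D) <= count id (take i D))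
          (iota 0 (size D).+1)].

Fixpoint up_xs (x : nat) (D : seq bool) : seq nat :=
  match D with
  | [::] => [::]
  | true :: D' => x :: up_xs x D'
  | false :: D' => up_xs x.+1 D'
  end.

(* area vector, 0-indexed: entry j is a_{j+1} = j - x_{j+1}, the number of
   full unit squares between the path and the diagonal in row j <= y <= j+1. *)
Definition area_vec (n : nat) (D : seq bool) : seq nat :=
  mkseq (fun j => j - nth 0 (up_xs 0 D) j) n.

Definition area (n : nat) (D : seq bool) (i : 'I_n) : nat :=
  nth 0 (area_vec n D) i.

Definition psi_lt (n : nat) (D : seq bool) (i j : 'I_n) : bool :=
  (area n D i + 2 <= area n D j) || ((area n D i + 1 == area n D j) && (i < j)).

Definition psi_le (n : nat) (D : seq bool) : rel 'I_n :=
  fun i j => (i == j) || psi_lt n D i j.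

(* ---------- Plane trees: a node with an ordered (left-to-right) list of
   children. *)
Inductive ptree : Type := PNode of seq ptree.

(* number of non-root nodes *)
Fixpoint tsize (t : ptree) : nat :=
  match t with
  | PNode cs =>
      (fix go (cs : seq ptree) : nat :=
         match cs with [::] => 0 | c :: cs' => (tsize c).+1 + go cs' end) cs
  end.

Fixpoint maxdeg (t : ptree) : nat :=
  match t with
  | PNode cs =>
      maxn (size cs)
        ((fix go (cs : seq ptree) : nat :=
            match cs with [::] => 0 | c :: cs' => maxn (maxdeg c) (go cs') end) cs)
  end.

(* Xi_steep: clockwise contour walk from the root, subtrees visited from right
   to left; up (true) on first traversal of an edge, right (false) on second. *)
Fixpoint Xi_steep (t : ptree) : seq bool :=
  match t with
  | PNode cs =>
      (fix go (cs : seq ptree) : seq bool :=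
         match cs with
         | [::] => [::]
         | c :: cs' => go cs' ++ (true :: Xi_steep c ++ [:: false])
         end) cs
  end.

(* The values x_u of all non-root nodes of the subtree t, where t sits at depth
   d, [frac] is sum_{i=1}^{d} c(u_i) (m+2)^{-i} for t's root, and [base] = m+2.
   The head child c of c :: cs' is the (size cs').+1-th child from the right. *)
Fixpoint xvals (base : nat) (d : nat) (frac : rat) (t : ptree) : seq rat :=
  match t with
  | PNode cs =>
      (fix go (cs : seq ptree) : seq rat :=
         match cs with
         | [::] => [::]
         | c :: cs' =>
             let f := (frac + (size cs').+1%:R / (base%:R ^+ d.+1))%R in
             ((d.+1)%:R + f)%R :: xvals base d.+1 f c ++ go cs'
         end) cs
  end.

Definition Sxs (t : ptree) : seq rat :=
  sort (fun x y : rat => (x <= y)%R) (undup (xvals (maxdeg t + 2) 0 0 t)).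

Definition Xi_poset_lt (t : ptree) (i j : 'I_(size (Sxs t))) : bool :=
  (nth 0 (Sxs t) i + 1 < nth 0 (Sxs t) j)%R.

Definition Xi_poset_le (t : ptree) : rel 'I_(size (Sxs t)) :=
  fun i j => (i == j) || Xi_poset_lt t i j.

Definition poset_iso {A B : finType} (R : rel A) (R' : rel B) : Prop :=
  exists f : A -> B, bijective f /\ forall x y, R x y = R' (f x) (f y).

From Pilot Require Import Defs.
From mathcomp Require Import all_boot all_order all_algebra.
From mathcomp Require Import zify lra.
Import Defs. (* Defs.tsize, not tuple.tsize *)
Import Order.TTheory GRing.Theory Num.Theory.

(* Put T = Lambda_steep D and list the non-root nodes of T in the order of the
   contour walk (children from right to left, preorder), i.e. the order in
   which Xi_steep emits their up steps.  To each node we attach its depth d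
   and the fractional part phi = sum_i c(u_i) (m+2)^-i of its value x = d + phi.
   Three facts carry the argument:
   - the j-th up step of Xi_steep T has x-coordinate j + 1 - d_j, so the area
     vector of D is a_j = d_j - 1;
   - the fractional parts lie in (0,1) and strictly increase in walk order, as
     (m+2)-adic expansions with digits 1..m ordered by the walk;
   - hence x_i + 1 < x_j iff d_i + 2 <= d_j, or d_i + 1 = d_j and i < j, which
     is exactly the relation i <_psi j.
   Finally the values are pairwise distinct, so Sxs T is a reordering of them
   and the reindexing map 'I_n -> 'I_n is the desired poset isomorphism. *)

Definition ptree_cons_ind (P : ptree -> Prop) (P_leaf : P (PNode [::]))
  (P_cons : forall c cs, P c -> P (PNode cs) -> P (PNode (c :: cs))) :
  forall t, P t :=
  fix F t := match t with PNode cs =>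
    (fix G cs : P (PNode cs) := match cs with
       | [::] => P_leaf
       | c :: cs' => P_cons c cs' (F c) (G cs') end) cs end.

Definition children (t : ptree) : seq ptree := let: PNode cs := t in cs.

(* The non-root nodes of a subtree sitting at depth d whose root has
   fractional part phi, as pairs (depth, fractional part), listed in the
   order in which Xi_steep visits them ([base] is m + 2). *)
Fixpoint nodes (base d : nat) (phi : rat) (t : ptree) : seq (nat * rat) :=
  match t with PNode cs =>
    (fix go cs := match cs with
       | [::] => [::]
       | c :: cs' =>
           let f := (phi + (size cs').+1%:R / (base%:R ^+ d.+1))%R in
           go cs' ++ ((d.+1, f) :: nodes base d.+1 f c)
       end) cs end.

(* One-step unfolding equations at a node whose leftmost child is c; they are
   used instead of simplification, which would expose the inner fixpoints. *)
Lemma nodes_cons base d phi c cs :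
  let f := (phi + (size cs).+1%:R / (base%:R ^+ d.+1))%R in
  nodes base d phi (PNode (c :: cs)) =
  nodes base d phi (PNode cs) ++ (d.+1, f) :: nodes base d.+1 f c.
Proof. by []. Qed.

Lemma Xi_steep_cons c cs :
  Xi_steep (PNode (c :: cs)) = Xi_steep (PNode cs) ++ true :: Xi_steep c ++ [:: false].
Proof. by []. Qed.

Lemma tsize_cons c cs : tsize (PNode (c :: cs)) = (tsize c).+1 + tsize (PNode cs).
Proof. by []. Qed.

Lemma xvals_cons base d phi c cs :
  let f := (phi + (size cs).+1%:R / (base%:R ^+ d.+1))%R in
  xvals base d phi (PNode (c :: cs)) =
  (d.+1%:R + f)%R :: xvals base d.+1 f c ++ xvals base d phi (PNode cs).
Proof. by []. Qed.

Lemma maxdeg_cons c cs :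
  maxdeg c <= maxdeg (PNode (c :: cs)) /\ maxdeg (PNode cs) <= maxdeg (PNode (c :: cs)).
Proof.
rewrite /=; split; first by rewrite leq_max leq_max leqnn orbT.
by rewrite geq_max leq_max ltnW //= leq_max orbC leq_max leqnn orbT.
Qed.

Lemma size_children_maxdeg t : size (children t) <= maxdeg t.
Proof. by case: t => cs /=; rewrite leq_max leqnn. Qed.

Lemma up_xs_cat x a b : up_xs x (a ++ b) = up_xs x a ++ up_xs (x + count negb a) b.
Proof.
elim: a x => [|[] a IH] x /=; first by rewrite addn0.
  by rewrite IH.
by rewrite IH addSnnS.
Qed.

Lemma up_xs_up x w : up_xs x (true :: w) = x :: up_xs x w.
Proof. by []. Qed.

Lemma size_up_xs x w : size (up_xs x w) = count id w.
Proof. by elim: w x => [|[] w IH] x //=; rewrite IH. Qed.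

(* Every edge of T contributes one up step and one right step. *)
Lemma count_Xi_steep t :
  count id (Xi_steep t) = tsize t /\ count negb (Xi_steep t) = tsize t.
Proof.
elim/ptree_cons_ind: t => [//|c cs [upc rightc] [ups rights]].
rewrite Xi_steep_cons tsize_cons; move: (tsize (PNode cs)) ups rights => k ups rights.
by rewrite !count_cat /= !count_cat upc rightc ups rights /=; lia.
Qed.

Lemma size_nodes base d phi t : size (nodes base d phi t) = tsize t.
Proof.
elim/ptree_cons_ind: t d phi => [//|c cs IHc IHs] d phi.
by rewrite nodes_cons tsize_cons size_cat /= IHc IHs addnC.
Qed.

(* The j-th up step of the walk from (x, .) around a subtree at depth d enters
   the j-th node, and x-coordinate plus depth of that node is x + j + d + 1. *)
Lemma up_xs_nodes base t x d phi j : j < tsize t ->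
  nth 0 (up_xs x (Xi_steep t)) j + (nth (0, 0%R) (nodes base d phi t) j).1
  = x + j + d + 1.
Proof.
elim/ptree_cons_ind: t x d phi j => [|c cs IHc IHs] x d phi j //.
rewrite tsize_cons Xi_steep_cons nodes_cons up_xs_cat up_xs_up up_xs_cat cats0 => hj.
rewrite !nth_cat size_up_xs size_nodes (proj1 (count_Xi_steep _)).
rewrite (proj2 (count_Xi_steep _)).
case: ltnP => hjs; first by rewrite IHs.
move: (tsize (PNode cs)) hjs hj => s hjs hj.
case E: (j - s) => [|k] /=; first lia.
rewrite IHc; lia.
Qed.

Lemma nodes_depth_gt base t d phi : all (fun p => d < p.1) (nodes base d phi t).
Proof.
elim/ptree_cons_ind: t d phi => [//|c cs IHc IHs] d phi.
rewrite nodes_cons all_cat IHs /= ltnSn /=.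
by apply: sub_all (IHc d.+1 _) => p /= /ltnW.
Qed.

(* The value x_u of a node is its depth plus its fractional part; as a
   multiset these are exactly the values listed by xvals. *)
Definition node_value (p : nat * rat) : rat := (p.1%:R + p.2)%R.

Lemma perm_xvals_nodes base t d phi :
  perm_eq (xvals base d phi t) (map node_value (nodes base d phi t)).
Proof.
elim/ptree_cons_ind: t d phi => [//|c cs IHc IHs] d phi.
rewrite xvals_cons nodes_cons map_cat map_cons perm_sym perm_catC cat_cons.
by rewrite perm_cons perm_sym; apply: perm_cat.
Qed.

Local Open Scope ring_scope.

(* A digit k <= m at place d+2 weighs at most one unit of place d+1. *)
Lemma digit_weight_le (k m d : nat) : (k <= m)%N ->
  k.+1%:R / ((m + 2)%:R ^+ d.+2) <= 1 / (m + 2)%:R ^+ d.+1 :> rat.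
Proof.
move=> hk.
have hq : 0 < m.+2%:R ^+ d.+1 :> rat by apply: exprn_gt0; rewrite ltr0n.
rewrite addn2 exprS ler_pdivrMr ?mulr_gt0 ?ltr0n //.
rewrite mul1r mulrCA mulVf ?mulr1 ?gt_eqF // ler_nat; lia.
Qed.

(* With base m + 2 > maxdeg + 1, the fractional parts of the nodes below a
   vertex at depth d with fractional part phi and k children lie strictly
   between phi and phi + (k+1)/(m+2)^(d+1), and increase strictly in walk
   order (the next sibling to the left starts above this whole range). *)
Lemma nodes_frac_spec m t : (maxdeg t <= m)%N -> forall d phi,
  {in map snd (nodes (m + 2) d phi t), forall e,
     phi < e < phi + (size (children t)).+1%:R / ((m + 2)%:R ^+ d.+1)}
  /\ pairwise <%R (map snd (nodes (m + 2) d phi t)).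
Proof.
elim/ptree_cons_ind: t => [_ d phi|c cs IHc IHs hmd d phi]; first by [].
have [hc hs] := maxdeg_cons c cs.
have [Bs Ps] := IHs (leq_trans hs hmd) d phi.
set q := (m + 2)%:R ^+ d.+1 in Bs *.
have q_gt0 : 0 < q by apply: exprn_gt0; rewrite ltr0n addn2.
set a := (size cs).+1%:R / q.
have a_gt0 : 0 < a by rewrite divr_gt0 // ltr0n.
have {}Bs : {in map snd (nodes (m + 2) d phi (PNode cs)), forall e, phi < e < phi + a}.
  exact: Bs.
have [Bc Pc] := IHc (leq_trans hc hmd) d.+1 (phi + a).
have hcw := digit_weight_le _ _ d
  (leq_trans (size_children_maxdeg c) (leq_trans hc hmd)).
rewrite -/q in hcw.
have unit_gt0 : 0 < 1 / q by rewrite divr_gt0.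
have next_digit : (size cs).+2%:R / q = a + 1 / q by rewrite -natr1 mulrDl.
rewrite nodes_cons map_cat map_cons /= -/q -/a next_digit.
split.
  move=> e; rewrite mem_cat in_cons.
  case/or3P => [/Bs /andP[e_gt e_lt]|/eqP->|/Bc /andP[e_gt e_lt]]; apply/andP; split; lra.
rewrite pairwise_cat pairwise_cons Ps Pc andbT /=; apply/andP; split.
  apply/allrelP => x y /Bs /andP[x_gt x_lt].
  by rewrite in_cons => /orP[/eqP->|/Bc /andP[y_gt y_lt]]; lra.
by apply/allP => y /Bc /andP[].
Qed.

Lemma nat_frac_inj (a b : nat) (x y : rat) : 0 < x < 1 -> 0 < y < 1 ->
  a%:R + x = b%:R + y -> a = b /\ x = y.
Proof.
move=> /andP[x_gt0 x_lt1] /andP[y_gt0 y_lt1] E.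
have a_lt : (a < b.+1)%N by rewrite -(ltr_nat rat) -natr1; lra.
have b_lt : (b < a.+1)%N by rewrite -(ltr_nat rat) -natr1; lra.
have ab : a = b by lia.
by split=> //; move: E; rewrite ab => /addrI.
Qed.

Lemma nat_frac_shift_lt (a b : nat) (x y : rat) : 0 < x < 1 -> 0 < y < 1 ->
  (a%:R + x + 1 < b%:R + y) = ((a + 2 <= b)%N || ((a.+1 == b) && (x < y))).
Proof.
move=> /andP[x_gt0 x_lt1] /andP[y_gt0 y_lt1].
have [h|[->|h]] : (a + 2 <= b)%N \/ b = a.+1 \/ (b <= a)%N by lia.
- have : (a + 2)%:R <= b%:R :> rat by rewrite ler_nat.
  by rewrite h natrD /= => ?; apply/idP; lra.
- rewrite eqxx (_ : (a + 2 <= a.+1)%N = false); last by lia.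
  by rewrite -addn1 natrD /=; apply/idP/idP => ?; lra.
- have : b%:R <= a%:R :> rat by rewrite ler_nat.
  have -> : (a + 2 <= b)%N = false by lia.
  have -> : (a.+1 == b) = false by apply/eqP; lia.
  by move=> ?; apply/negbTE; rewrite -leNgt; lra.
Qed.

Local Close Scope ring_scope.

Definition tnodes (t : ptree) : seq (nat * rat) := nodes (maxdeg t + 2) 0 0 t.
Definition depth_at (t : ptree) (i : nat) : nat := (nth (0, 0%R) (tnodes t) i).1.
Definition frac_at (t : ptree) (i : nat) : rat := (nth (0, 0%R) (tnodes t) i).2.

Lemma area_depth t (i : 'I_(tsize t)) :
  area (tsize t) (Xi_steep t) i = (depth_at t i).-1.
Proof.
rewrite /area /area_vec nth_mkseq //.
have := up_xs_nodes (maxdeg t + 2) t 0 0 0%R i (ltn_ord i).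
by rewrite /depth_at /tnodes; lia.
Qed.

Lemma depth_at_gt0 {t i} : i < tsize t -> 0 < depth_at t i.
Proof.
move=> hi; apply: (all_nthP (0, 0%R) (nodes_depth_gt _ t 0 0)).
by rewrite size_nodes.
Qed.

Lemma frac_at_bounds {t i} : i < tsize t -> (0 < frac_at t i < 1)%R.
Proof.
move=> hi; have [B _] := nodes_frac_spec _ t (leqnn _) 0 0%R.
have /B /andP[-> lt_digit] : frac_at t i \in map snd (tnodes t).
  by rewrite (map_f snd (mem_nth _ _)) // size_nodes.
apply: (lt_le_trans lt_digit).
rewrite add0r expr1 ler_pdivrMr ?ltr0n ?addn2 // mul1r ler_nat.
by have := size_children_maxdeg t; lia.
Qed.

Lemma frac_at_lt {t i j} : i < tsize t -> j < tsize t ->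
  (frac_at t i < frac_at t j)%R = (i < j).
Proof.
have [_ P] := nodes_frac_spec _ t (leqnn _) 0 0%R.
have incr k l : k < tsize t -> l < tsize t -> k < l -> (frac_at t k < frac_at t l)%R.
  move=> hk hl hkl; have := (pairwiseP 0%R P) k l.
  by rewrite !inE size_map size_nodes !(nth_map (0, 0%R)) ?size_nodes //; apply.
move=> hi hj; case: ltngtP => [/incr->//|hji|->]; last by rewrite ltxx.
by apply/negbTE; rewrite -leNgt ltW ?incr.
Qed.

Definition value_at (t : ptree) (i : nat) : rat := node_value (nth (0, 0%R) (tnodes t) i).

Lemma size_values t : size (map node_value (tnodes t)) = tsize t.
Proof. by rewrite size_map size_nodes. Qed.

Lemma nth_values t i : i < tsize t ->
  nth 0%R (map node_value (tnodes t)) i = value_at t i.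
Proof. by move=> hi; rewrite (nth_map (0, 0%R)) ?size_nodes. Qed.

Lemma uniq_values t : uniq (map node_value (tnodes t)).
Proof.
apply/(uniqP 0%R) => i j; rewrite !inE size_values => hi hj.
rewrite !nth_values // => /nat_frac_inj.
move=> /(_ (frac_at_bounds hi) (frac_at_bounds hj)) [_ E].
apply/eqP; rewrite eqn_leq (leqNgt i) (leqNgt j).
by rewrite -(frac_at_lt hi hj) -(frac_at_lt hj hi) /frac_at E ltxx.
Qed.

Lemma perm_Sxs t : perm_eq (Sxs t) (map node_value (tnodes t)).
Proof.
have P := perm_xvals_nodes (maxdeg t + 2) t 0 0.
rewrite /Sxs perm_sort undup_id; first exact: P.
by rewrite (perm_uniq P) uniq_values.
Qed.

Lemma psi_lt_values t (i j : 'I_(tsize t)) :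
  psi_lt (tsize t) (Xi_steep t) i j = (value_at t i + 1 < value_at t j)%R.
Proof.
rewrite /psi_lt !area_depth /value_at /node_value.
rewrite nat_frac_shift_lt ?frac_at_bounds // -/(frac_at t i) -/(frac_at t j).
rewrite frac_at_lt //.
have := depth_at_gt0 (ltn_ord i); have := depth_at_gt0 (ltn_ord j).
rewrite /depth_at; case: (nth _ _ i) => [[|a] x]; case: (nth _ _ j) => [[|b] y] //= _ _.
by rewrite addSn ltnS eqSS addn1.
Qed.

Lemma reindex_perm {A : eqType} (x0 : A) {n : nat} {X S : seq A} :
  size X = n -> uniq X -> perm_eq S X ->
  exists f : 'I_n -> 'I_(size S),
    bijective f /\ forall i, nth x0 S (f i) = nth x0 X i.
Proof.
move=> sX uX pS.
have in_S (i : 'I_n) : index (nth x0 X i) S < size S.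
  by rewrite index_mem (perm_mem pS) mem_nth // sX.
pose f i := Ordinal (in_S i).
have f_nth i : nth x0 S (f i) = nth x0 X i by rewrite nth_index // -index_mem.
have f_inj : injective f.
  move=> i j /(congr1 (nth x0 S \o val)) /=; rewrite !f_nth => E.
  by apply: val_inj; apply: (uniqP x0 uX) E; rewrite inE sX.
exists f; split=> //; apply: inj_card_bij f_inj _.
by rewrite !card_ord (perm_size pS) sX.
Qed.

Theorem mainTheorem4 (n : nat) (D : seq bool) (T : ptree) :
  (1 <= n)%N -> is_dyck n D -> Xi_steep T = D ->
  poset_iso (psi_le n D) (Xi_poset_le T).
Proof.
move=> _ /and3P[_ /eqP count_up _] Xi_T; subst D.
have {count_up} <- : tsize T = n by rewrite -count_up (proj1 (count_Xi_steep T)).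
have [f [f_bij f_nth]] :=
  reindex_perm 0%R (size_values T) (uniq_values T) (perm_Sxs T).
exists f; split=> // i j.
rewrite /psi_le /Xi_poset_le /Xi_poset_lt (bij_eq f_bij) !f_nth.
by rewrite !nth_values // psi_lt_values.
Qed.
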